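(* Let $G$ be a neighborhood unit square graph with $V(G)\ne\emptyset$. Let $X$ be the set of vertices $v\in V(G)$ for which there exist $\ell\ge4$ and distinct vertices $w_1,\dots,w_\ell\in V(G)\setminus\{v\}$ such that $vw_i\notin E(G)$ for all $i\in[\ell]$ and $G[\{w_1,\dots,w_\ell\}]\cong C_\ell$. Then $X\ne V(G)$.
   Context: A neighborhood unit square graph is a graph $G$ admitting a map $f\colon V(G)\to[-1,1]^2$ such that for distinct $v,w$, $vw\in E(G)$ iff $\|f(v)-f(w)\|_\infty\le1$. $C_\ell$ is the cycle of length $\ell$. *)

From HB Require Import structures.
From mathcomp Require Import all_boot all_order all_algebra.
Set Implicit Arguments. Unset Strict Implicit. Unset Printing Implicit Defensive.
Import Order.TTheory GRing.Theory Num.Theory.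

Definition simple_graph (T : finType) (e : rel T) : Prop :=
  symmetric e /\ irreflexive e.

Local Open Scope ring_scope.

Definition nusg_embedding (R : realFieldType) (T : finType) (e : rel T)
    (f : T -> R * R) : Prop :=
  (forall v, -1 <= (f v).1 <= 1 /\ -1 <= (f v).2 <= 1) /\
  (forall v w, v != w ->
     (e v w <-> Num.max `|(f v).1 - (f w).1| `|(f v).2 - (f w).2| <= 1)).

Definition nusg (R : realFieldType) (T : finType) (e : rel T) : Prop :=
  simple_graph e /\ exists f : T -> R * R, nusg_embedding e f.

Local Close Scope ring_scope.

Definition cycle_adj (l : nat) (i j : 'I_l) : bool :=
  (val j == (val i).+1 %% l) || (val i == (val j).+1 %% l).

Definition in_X (T : finType) (e : rel T) (v : T) : Prop :=
  exists (l : nat) (w : 'I_l -> T),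
    4 <= l /\ injective w /\
    (forall i, w i != v) /\
    (forall i, ~~ e v (w i)) /\
    exists s : 'I_l -> 'I_l, bijective s /\
      forall i j, i != j -> e (w i) (w j) = cycle_adj (s i) (s j).

From mathcomp Require Import all_boot all_order all_algebra.
From mathcomp Require Import zify lra.
Set Implicit Arguments. Unset Strict Implicit. Unset Printing Implicit Defensive.
Import Order.TTheory GRing.Theory Num.Theory.

(* Let v be a vertex whose second coordinate y is smallest in absolute value,
   say y(v) >= 0, and let H be a hole (an induced cycle of length at least 4)
   anticomplete to v.  Every vertex u of H
   has two non-adjacent H-neighbours a, b, so a and b must not fit in a common
   unit box.  Taking u highest in H shows that H lies strictly below v: if not,
   a and b are vertically within 1 of v, hence horizontally more than 1 away
   from v, necessarily on the same side, which puts them in a common unit box.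
   Taking u leftmost in H shows that H is not contained in the closed lower
   half-plane.  So some vertex of H has 0 < y < y(v), contradicting the choice
   of v. *)

Definition induced_P3 (T : finType) (e : rel T) (a u b : T) : Prop :=
  [/\ e u a, e u b, a != b & ~~ e a b].

Lemma succ_modn (l x : nat) : x < l -> x.+1 %% l = if x.+1 == l then 0 else x.+1.
Proof.
move=> lt_xl; case: eqP => [->|ne_xl]; first by rewrite modnn.
by rewrite modn_small //; lia.
Qed.

Lemma cycle_adj_irr (l : nat) (k : 'I_l) : 1 < l -> ~~ cycle_adj k k.
Proof.
case: k => m lt_ml l_gt1; rewrite /cycle_adj /= orbb succ_modn //.
by case: ifP => /eqP; lia.
Qed.

Lemma cycle_adj_P3 (l : nat) (k : 'I_l) : 3 < l ->
  exists k1 k2 : 'I_l,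
    [/\ cycle_adj k k1, cycle_adj k k2, k1 != k2 & ~~ cycle_adj k1 k2].
Proof.
case: k => m lt_ml l_gt3.
pose a := if m.+1 == l then 0 else m.+1.
pose b := if m == 0 then l.-1 else m.-1.
have lt_al : a < l by rewrite /a; case: eqP => ?; lia.
have lt_bl : b < l by rewrite /b; case: eqP => ?; lia.
exists (Ordinal lt_al), (Ordinal lt_bl).
rewrite /cycle_adj /= !succ_modn // -(inj_eq val_inj) /= /a /b.
by split; repeat (case: eqP => /=; try lia).
Qed.

Section Hole.

Variables (T : finType) (e : rel T) (l : nat) (w : 'I_l -> T) (s : 'I_l -> 'I_l).
Hypotheses (l_gt3 : 3 < l) (w_inj : injective w) (s_bij : bijective s).
Hypothesis w_adj : forall i j, i != j -> e (w i) (w j) = cycle_adj (s i) (s j).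

Lemma hole_P3 (i : 'I_l) : exists j1 j2, induced_P3 e (w j1) (w i) (w j2).
Proof.
have [g sK gK] := s_bij.
have [k1 [k2 [adj1 adj2 ne12 nadj12]]] := cycle_adj_P3 (s i) l_gt3.
have ne_ig k : cycle_adj (s i) k -> i != g k.
  move=> adj_k; apply: contraTneq adj_k => ->.
  by rewrite gK cycle_adj_irr //; lia.
exists (g k1), (g k2); split.
- by rewrite w_adj ?ne_ig // gK.
- by rewrite w_adj ?ne_ig // gK.
- by rewrite (inj_eq w_inj) (can_eq gK).
- by rewrite w_adj ?(can_eq gK) // !gK.
Qed.

Lemma hole_min_P3 (d : Order.disp_t) (O : orderType d) (F : T -> O) :
  exists i, (forall k, (F (w i) <= F (w k))%O) /\
            exists j1 j2, induced_P3 e (w j1) (w i) (w j2).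
Proof.
have i0 : 'I_l by exists 0; lia.
case: (@arg_minP _ _ _ i0 predT (F \o w) (erefl true)) => i _ i_min.
by exists i; split; [move=> k; apply: i_min | apply: hole_P3].
Qed.

End Hole.

Local Open Scope ring_scope.

Lemma dist_le1_window (R : realDomainType) (c x y : R) :
  c <= x <= c + 1 -> c <= y <= c + 1 -> `|x - y| <= 1.
Proof.
by move=> /andP[? ?] /andP[? ?]; rewrite ler_norml; apply/andP; split; lra.
Qed.

(* Points of [-1, 1] at distance more than 1 from a point of [-1, 1] lie on
   one side of it, inside an interval of length less than 1. *)
Lemma dist_le1_far_same_side (R : realDomainType) (a x y : R) :
  `|a| <= 1 -> `|x| <= 1 -> `|y| <= 1 ->
  1 < `|x - a| -> 1 < `|y - a| -> `|x - y| <= 1.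
Proof.
rewrite !ler_norml !ltr_normr => /andP[? ?] /andP[? ?] /andP[? ?].
by move=> /orP[?|?] /orP[?|?]; apply/andP; split; lra.
Qed.

Section UnitSquareHole.

Variables (R : realDomainType) (T : finType) (e : rel T) (X Y : T -> R).
Hypotheses (e_irr : irreflexive e)
  (X_bound : forall u, `|X u| <= 1) (Y_bound : forall u, `|Y u| <= 1).
Hypothesis edgeE : forall u t, u != t ->
  e u t = (`|X u - X t| <= 1) && (`|Y u - Y t| <= 1).

Lemma edge_close (u t : T) : e u t -> `|X u - X t| <= 1 /\ `|Y u - Y t| <= 1.
Proof.
move=> e_ut.
have ne_ut : u != t by apply: contraTneq e_ut => ->; rewrite e_irr.
by move: e_ut; rewrite edgeE // => /andP.
Qed.

Lemma induced_P3_ends_apart (a u b : T) : induced_P3 e a u b ->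
  `|X a - X b| <= 1 -> `|Y a - Y b| <= 1 -> False.
Proof.
by case=> _ _ ne_ab nadj_ab dX dY; move: nadj_ab; rewrite edgeE // dX dY.
Qed.

Variables (l : nat) (w : 'I_l -> T) (s : 'I_l -> 'I_l).
Hypotheses (l_gt3 : (3 < l)%N) (w_inj : injective w) (s_bij : bijective s).
Hypothesis w_adj : forall i j, i != j -> e (w i) (w j) = cycle_adj (s i) (s j).

Lemma hole_below (v : T) : 0 <= Y v ->
  (forall i, w i != v) -> (forall i, ~~ e v (w i)) ->
  forall i, Y (w i) < Y v.
Proof.
move=> Yv_ge0 w_neq_v v_nadj.
have [i [i_top [j1 [j2 P3]]]] :=
  hole_min_P3 l_gt3 w_inj s_bij w_adj (fun t => - Y t).
suff Ywi_lt : Y (w i) < Y v by move=> k; have := i_top k; lra.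
rewrite ltNge; apply/negP => Yv_le.
have [e_i1 e_i2 _ _] := P3.
have [[_ dY1] [_ dY2]] := (edge_close e_i1, edge_close e_i2).
have Y_window j : `|Y (w i) - Y (w j)| <= 1 ->
    Y (w i) - 1 <= Y (w j) <= Y (w i) - 1 + 1.
  rewrite ler_norml => /andP[? ?]; move: (i_top j) => ?.
  by apply/andP; split; lra.
have X_far j : `|Y (w i) - Y (w j)| <= 1 -> 1 < `|X (w j) - X v|.
  move=> /Y_window /andP[? ?].
  have dYvj : `|Y v - Y (w j)| <= 1.
    move: (Y_bound (w j)); rewrite !ler_norml => /andP[? ?].
    by apply/andP; split; lra.
  by have := v_nadj j; rewrite edgeE 1?eq_sym // dYvj andbT distrC -ltNge.
apply: (induced_P3_ends_apart P3).
  exact: dist_le1_far_same_side (X_bound v) (X_bound _) (X_bound _)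
           (X_far _ dY1) (X_far _ dY2).
exact: dist_le1_window (Y_window _ dY1) (Y_window _ dY2).
Qed.

Lemma hole_meets_upper_half : exists i, 0 < Y (w i).
Proof.
case: (boolP [exists i, 0 < Y (w i)]) => [/existsP // | /existsPn Yw_le0].
exfalso.
have [i [i_left [j1 [j2 P3]]]] := hole_min_P3 l_gt3 w_inj s_bij w_adj X.
have [e_i1 e_i2 _ _] := P3.
have [[dX1 _] [dX2 _]] := (edge_close e_i1, edge_close e_i2).
have X_window j : `|X (w i) - X (w j)| <= 1 ->
    X (w i) <= X (w j) <= X (w i) + 1.
  rewrite ler_norml => /andP[? ?]; move: (i_left j) => ?.
  by apply/andP; split; lra.
have Y_window j : -1 <= Y (w j) <= -1 + 1.
  by move: (Y_bound (w j)) (Yw_le0 j); rewrite ler_norml -leNgt => /andP[? ?] ?;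
    apply/andP; split; lra.
apply: (induced_P3_ends_apart P3).
  exact: dist_le1_window (X_window _ dX1) (X_window _ dX2).
exact: dist_le1_window.
Qed.

End UnitSquareHole.

Lemma hole_nearer_axis (R : realDomainType) (T : finType) (e : rel T)
    (X Y : T -> R) (e_irr : irreflexive e)
    (X_bound : forall u, `|X u| <= 1) (Y_bound : forall u, `|Y u| <= 1)
    (edgeE : forall u t, u != t ->
       e u t = (`|X u - X t| <= 1) && (`|Y u - Y t| <= 1))
    (l : nat) (w : 'I_l -> T) (s : 'I_l -> 'I_l)
    (l_gt3 : (3 < l)%N) (w_inj : injective w) (s_bij : bijective s)
    (w_adj : forall i j, i != j -> e (w i) (w j) = cycle_adj (s i) (s j))
    (v : T) :
  (forall i, w i != v) -> (forall i, ~~ e v (w i)) ->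
  exists i, `|Y (w i)| < `|Y v|.
Proof.
move=> w_neq_v v_nadj.
wlog Yv_ge0 : Y Y_bound edgeE / 0 <= Y v.
  move=> nearer; case: (lerP 0 (Y v)) => [|Yv_lt0]; first exact: nearer.
  have [u|u t ut||i] := nearer (fun t => - Y t).
  - by rewrite normrN.
  - by rewrite edgeE // -opprD normrN.
  - by rewrite oppr_ge0 ltW.
  by exists i; rewrite -[`|Y (w i)|]normrN -[`|Y v|]normrN.
have [i Ywi_gt0] :=
  hole_meets_upper_half e_irr Y_bound edgeE l_gt3 w_inj s_bij w_adj.
exists i; rewrite !ger0_norm // ?ltW //.
exact: (hole_below e_irr X_bound Y_bound edgeE l_gt3 w_inj s_bij w_adj Yv_ge0).
Qed.

Local Close Scope ring_scope.

Theorem mainTheorem18 (R : realFieldType) (T : finType) (e : rel T)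
    (hG : nusg R e) (hne : 0 < #|T|) :
  ~ (forall v : T, in_X e v).
Proof.
case: hG => [[_ e_irr] [f [f_bound f_edge]]] all_X.
have [t0 _] := card_gt0P hne.
case: (@arg_minP _ _ _ t0 predT (fun u => `|(f u).2|%R) (erefl true))
  => v _ v_min.
have [l [w [l_ge4 [w_inj [w_neq_v [v_nadj [s [s_bij w_adj]]]]]]]] := all_X v.
have [||u t ut|i] :=
  hole_nearer_axis (X := fun u => (f u).1) (Y := fun u => (f u).2)
    e_irr _ _ _ l_ge4 w_inj s_bij w_adj w_neq_v v_nadj.
- by move=> u; rewrite ler_norml; case: (f_bound u).
- by move=> u; rewrite ler_norml; case: (f_bound u).
- by rewrite -ge_max; apply/idP/idP => /f_edge; apply.
- by rewrite ltNge v_min.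
Qed.
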